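(* Let $D$ be a rank two filtered $(\varphi,N,L/K,E)$-module with $N\neq0$, with basis $\underline\eta$ such that $[\varphi]_{\underline\eta}=\mathrm{diag}(p\delta\cdot\vec1,\delta\cdot\vec1)$ ($\delta\in E^\times$), $[N]_{\underline\eta}=\begin{pmatrix}\vec0&\vec0\\ \vec1&\vec0\end{pmatrix}$, and filtration $\mathcal F(\vec x,\vec y;\underline k)$ with $k_i\ge0$. Then the $G$-action is given by $[g]_{\underline\eta}=\mathrm{diag}(\chi(g)\cdot\vec1,\chi(g)\cdot\vec1)$ for a single character $\chi:G\to E^\times$, and $D$ is weakly admissible if and only if $$2ef\,v_p(\delta)+ef=\sum_{i=0}^{m-1}k_i\quad\text{and}\quad ef\,v_p(\delta)\ge\sum_{\{i:x_i=0\}}k_i.$$ If $D$ is weakly admissible, it is irreducible if and only if the inequality is strict; if equality holds, $D_2=E^f\eta_2$ is its only nonzero proper weakly admissible sub-object.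
   Context: Setting: $p$ prime, $K/\mathbb{Q}_p$ finite, $L/K$ finite Galois, $G=\mathrm{Gal}(L/K)$, $L_0$ maximal unramified subfield of $L$, $f=[L_0:\mathbb{Q}_p]$, $e=[L:L_0]$, $m=ef$, $E$ finite over $\mathbb{Q}_p$ containing all embeddings of $L$; $v_p(p)=1$. $L_0\otimes E\cong E^f$, $L\otimes E\cong E^m$, $E^f\to E^m$ is $\vec a\mapsto\vec a^{\otimes e}$ ($e$ concatenated copies); $\varphi(x_0,\dots,x_{f-1})=(x_1,\dots,x_{f-1},x_0)$; $c\cdot\vec 1=(c,\dots,c)$; $G$ acts on $E^f$ via $g|_{L_0}$. A rank two filtered $(\varphi,N,L/K,E)$-module: free $E^f$-module $D$ of rank 2 with $\varphi$-semilinear bijection $\varphi$, nilpotent $E^f$-linear $N$ with $N\varphi=p\varphi N$, a filtration on $D_L=L\otimes_{L_0}D$, and a semilinear $E$-linear $G$-action commuting with $\varphi,N$ and preserving the filtration; matrices via $(T\eta_1,T\eta_2)=(\eta_1,\eta_2)[T]$. Filtration $\mathcal F(\vec x,\vec y;\underline k)$: $\mathrm{Fil}^jD_L=D_L$ ($j\le0$), $\mathrm{Fil}^jD_L=E^mf_{\{i:k_i\ge j\}}(\vec x(1\otimes\eta_1)+\vec y(1\otimes\eta_2))$ ($j\ge1$), $(x_i,y_i)\ne(0,0)$, $f_J=\sum_{s\in J}e_s$. $t_H(M)=\sum_s\sum_j j\dim_E(e_s\mathrm{Fil}^jM/e_s\mathrm{Fil}^{j+1}M)$; for a $\varphi$-stable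 free $D'$ with $[\varphi|_{D'}]=A$, $t_N(D')=e\,v_p(\prod_j(\det A)_j)$; $D'_L$ has the induced filtration. $D$ is weakly admissible if $t_H(D_L)=t_N(D)$ and $t_H(D'_L)\le t_N(D')$ for every $E^f$-submodule $D'$ stable under $\varphi$ and $N$. A weakly admissible sub-object is a nonzero submodule stable under $\varphi$, $N$, $G$ with $t_H(D'_L)=t_N(D')$; irreducible means no proper such sub-object. *)

From HB Require Import structures.
From mathcomp Require Import all_boot all_fingroup all_order all_algebra.
Set Implicit Arguments. Unset Strict Implicit. Unset Printing Implicit Defensive.
Import Order.TTheory GRing.Theory Num.Theory.
Local Open Scope ring_scope.

(* L0 (x) E = E^f indexed by 'I_f, L (x) E = E^m (m = e f) indexed by
   'I_(e*f); the map E^f -> E^m (e concatenated copies) sends component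
   s of E^m to component (s mod f) of E^f. *)
Lemma resf_proof (f e : nat) (s : 'I_(e * f)) : (s %% f < f)%N.
Proof.
case: f s => [|f] s; last by rewrite ltn_mod.
case: s => i hi; exfalso; move: hi; by rewrite muln0.
Qed.
Definition resf (f e : nat) (s : 'I_(e * f)) : 'I_f := Ordinal (resf_proof s).

(* An element v = v_1 eta_1 + v_2 eta_2 of D (v_i in E^f) is stored as
   the family t |-> (v_1(t), v_2(t))^T of column vectors.  A map T with
   matrix [T] (convention (T eta_1, T eta_2) = (eta_1, eta_2)[T]) is
   stored as the family t |-> [T](t) of its components. *)
Definition DT (E : fieldType) (f : nat) := 'I_f -> 'cV[E]_2.

(* phi(x_0,..,x_{f-1}) = (x_1,..,x_{f-1},x_0): component t of phi(v)
   is [phi](t) * v(t+1). *)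
Definition phi_op (E : fieldType) (f : nat) (A : 'I_f -> 'M[E]_2) (v : DT E f)
  : DT E f := fun t => A t *m v (ordS t).
Definition lin_op (E : fieldType) (f : nat) (A : 'I_f -> 'M[E]_2) (v : DT E f)
  : DT E f := fun t => A t *m v t.
(* g acts on E^f by (g.x)_t = x_(act t); a g-semilinear map with matrix
   [g] sends v to t |-> [g](t) * v(act t). *)
Definition semi_op (E : fieldType) (f : nat) (act : 'I_f -> 'I_f)
  (A : 'I_f -> 'M[E]_2) (v : DT E f) : DT E f := fun t => A t *m v (act t).

Definition phi_diag (E : fieldType) (f : nat) (p : nat) (delta : E)
  : 'I_f -> 'M[E]_2 :=
  fun _ => \matrix_(i < 2, j < 2)
             (if i == j then (if i == 0 then p%:R * delta else delta) else 0).
Definition N_std (E : fieldType) (f : nat) : 'I_f -> 'M[E]_2 :=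
  fun _ => \matrix_(i < 2, j < 2) (if (i == 1) && (j == 0) then 1 else 0).

(* A filtration on D_L: Fil j s = row space (in coordinates w.r.t.
   1 (x) eta_1, 1 (x) eta_2) of the s-component e_s Fil^j D_L. *)
Definition Fil_xy (E : fieldType) (m : nat) (x y : 'I_m -> E) (k : 'I_m -> int)
  : int -> 'I_m -> 'M[E]_2 :=
  fun j s => if j <= 0 then 1%:M
             else if j <= k s then
               (<< \row_(i < 2) (if i == 0 then x s else y s) >>)%MS
             else 0.

Definition Gaction_ok (E : fieldType) (G : finGroupType) (f e : nat)
  (act : G -> 'I_f -> 'I_f) (actm : G -> 'I_(e * f) -> 'I_(e * f))
  (gA : G -> 'I_f -> 'M[E]_2) (phiA NA : 'I_f -> 'M[E]_2)
  (Fil : int -> 'I_(e * f) -> 'M[E]_2) : Prop :=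
  (* G acts on E^f = L0 (x) E through g|_{L0}, a power of Frobenius *)
  [/\ [/\ (forall t, act 1%g t = t),
      (forall g h t, act (g * h)%g t = act h (act g t)) &
      (forall g t, act g (ordS t) = ordS (act g t))],
  (* G acts on E^m = L (x) E compatibly with E^f -> E^m *)
      [/\ (forall s, actm 1%g s = s),
      (forall g h s, actm (g * h)%g s = actm h (actm g s)) &
      (forall g s, resf (actm g s) = act g (resf s))] &
   [/\ (forall v t, semi_op (act 1%g) (gA 1%g) v t = v t),
       (forall g h v t, semi_op (act (g * h)%g) (gA (g * h)%g) v t
                        = semi_op (act g) (gA g) (semi_op (act h) (gA h) v) t),
       (forall g v t, phi_op phiA (semi_op (act g) (gA g) v) t
                      = semi_op (act g) (gA g) (phi_op phiA v) t),
       (forall g v t, lin_op NA (semi_op (act g) (gA g) v) t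
                      = semi_op (act g) (gA g) (lin_op NA v) t) &
       (forall g j s,
          (Fil j (actm g s) *m (gA g (resf s))^T <= Fil j s)%MS)]].

(* An E^f-submodule D' of D = family of its components e_t D' (subspaces
   of E^2, given as row spaces of coordinate rows). *)
Definition phi_stable (E : fieldType) (f : nat) (phiA : 'I_f -> 'M[E]_2)
  (V : 'I_f -> 'M[E]_2) := forall t, (V (ordS t) *m (phiA t)^T <= V t)%MS.
Definition lin_stable (E : fieldType) (f : nat) (NA : 'I_f -> 'M[E]_2)
  (V : 'I_f -> 'M[E]_2) := forall t, (V t *m (NA t)^T <= V t)%MS.
Definition G_stable (E : fieldType) (G : finGroupType) (f : nat)
  (act : G -> 'I_f -> 'I_f) (gA : G -> 'I_f -> 'M[E]_2) (V : 'I_f -> 'M[E]_2) :=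
  forall g t, (V (act g t) *m (gA g t)^T <= V t)%MS.

(* B = (b_1..b_r) is an E^f-basis of D' (row i of B t = b_i(t)). *)
Definition is_basis (E : fieldType) (f r : nat) (V : 'I_f -> 'M[E]_2)
  (B : 'I_f -> 'M[E]_(r, 2)) := forall t, row_free (B t) /\ (B t == V t)%MS.
(* A = [phi|_{D'}] in the basis B : phi(b_j) = sum_i A_ij b_i *)
Definition phi_matrix (E : fieldType) (f r : nat) (phiA : 'I_f -> 'M[E]_2)
  (B : 'I_f -> 'M[E]_(r, 2)) (A : 'I_f -> 'M[E]_r) :=
  forall t, B (ordS t) *m (phiA t)^T = (A t)^T *m B t.

(* induced filtration on D'_L = E^m D' : Fil^j D'_L = D'_L cap Fil^j D_L *)
Definition induced (E : fieldType) (f e : nat) (V : 'I_f -> 'M[E]_2)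
  (Fil : int -> 'I_(e * f) -> 'M[E]_2) : int -> 'I_(e * f) -> 'M[E]_2 :=
  fun j s => (V (resf s) :&: Fil j s)%MS.

(* t_H = sum_s sum_j j dim_E(e_s Fil^j / e_s Fil^(j+1)), the sum over j
   taken over the window lo <= j < lo + n (outside of which all graded
   pieces vanish for the filtrations considered). *)
Definition tH (E : fieldType) (m : nat) (Fil : int -> 'I_m -> 'M[E]_2)
  (lo : int) (n : nat) : int :=
  \sum_(s < m) \sum_(i < n)
     (lo + i%:Z) * ((\rank (Fil (lo + i%:Z) s))%:Z
                    - (\rank (Fil (lo + i%:Z + 1) s))%:Z).

Definition tN (E : fieldType) (vp : E -> rat) (f e r : nat)
  (A : 'I_f -> 'M[E]_r) : rat := e%:R * vp (\prod_(t < f) \det (A t)).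

Definition weakly_admissible (E : fieldType) (vp : E -> rat) (f e : nat)
  (phiA NA : 'I_f -> 'M[E]_2) (Fil : int -> 'I_(e * f) -> 'M[E]_2)
  (lo : int) (n : nat) : Prop :=
  ((tH Fil lo n)%:~R = tN vp e phiA) /\
  (forall V : 'I_f -> 'M[E]_2, phi_stable phiA V -> lin_stable NA V ->
   forall (r : nat) (B : 'I_f -> 'M[E]_(r, 2)) (A : 'I_f -> 'M[E]_r),
     is_basis V B -> phi_matrix phiA B A ->
     (tH (induced V Fil) lo n)%:~R <= tN vp e A).

Definition WA_subobject (E : fieldType) (vp : E -> rat) (G : finGroupType)
  (f e : nat) (phiA NA : 'I_f -> 'M[E]_2) (act : G -> 'I_f -> 'I_f)
  (gA : G -> 'I_f -> 'M[E]_2) (Fil : int -> 'I_(e * f) -> 'M[E]_2)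
  (lo : int) (n : nat) (V : 'I_f -> 'M[E]_2) : Prop :=
  [/\ exists t, V t != 0,
      phi_stable phiA V, lin_stable NA V, G_stable act gA V &
      exists (r : nat) (B : 'I_f -> 'M[E]_(r, 2)) (A : 'I_f -> 'M[E]_r),
        [/\ is_basis V B, phi_matrix phiA B A &
            (tH (induced V Fil) lo n)%:~R = tN vp e A]].

Definition proper_subobj (E : fieldType) (f : nat) (V : 'I_f -> 'M[E]_2) : Prop :=
  ~ (forall t, (V t == 1%:M)%MS).

Definition irreducible (E : fieldType) (vp : E -> rat) (G : finGroupType)
  (f e : nat) (phiA NA : 'I_f -> 'M[E]_2) (act : G -> 'I_f -> 'I_f)
  (gA : G -> 'I_f -> 'M[E]_2) (Fil : int -> 'I_(e * f) -> 'M[E]_2)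
  (lo : int) (n : nat) : Prop :=
  forall V, WA_subobject vp phiA NA act gA Fil lo n V -> ~ proper_subobj V.

Definition D2 (E : fieldType) (f : nat) : 'I_f -> 'M[E]_2 :=
  fun _ => delta_mx 0 1.

(* window for the filtration F(x,y;k) with k >= 0 *)
Definition kbound (m : nat) (k : 'I_m -> int) : nat :=
  (\max_(s < m) `|k s|%N).+1.

From HB Require Import structures.
From mathcomp Require Import all_boot all_fingroup all_order all_algebra.
Import Order.TTheory GRing.Theory Num.Theory.
Local Open Scope ring_scope.

Set Implicit Arguments. Unset Strict Implicit. Unset Printing Implicit Defensive.

(* If B is an E^f-basis of a phi-stable submodule and A the
     matrix of phi on it, then det A_t * det B_t = det B_(t+1) * det[phi], a
     "cocycle" relation along the cycle t |-> t+1 of 'I_f; taking the product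
     over t gives prod_t det A_t = det[phi]^f (prod_cocycle), hence t_N.
   - Hodge side.  All filtrations that occur are step filtrations whose s-th
     component has constant rank c_s on the levels 1..K_s and vanishes above;
     summation by parts gives t_H = sum_s K_s c_s (tH_step).
   - A submodule stable under N = ((0,0),(1,0)) has rank 0, 2, or is the line
     D_2 = E^f eta_2 (submodule_shape), so weak admissibility only has to be
     tested on D and D_2, where both invariants are explicit.
   - A g-semilinear map commuting with N and phi is scalar: commuting with N
     makes it lower triangular with equal diagonal entries, and commuting with
     phi forces the off-diagonal entry c to satisfy c_(t+1) = p c_t, which is
     impossible around the cycle unless c = 0, since p^f <> 1 in characteristic
     zero (semilinear_scalar).  The scalars form the character chi. *)

Lemma ordS_const (T : Type) (f : nat) (f_gt0 : (0 < f)%N) (P : 'I_f -> T) :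
  (forall t, P (ordS t) = P t) -> forall t, P t = P (Ordinal f_gt0).
Proof.
move=> P_shift [i lt_if]; elim: i lt_if => [|i IHi] lt_if; first by congr P; apply: val_inj.
have -> : Ordinal lt_if = ordS (Ordinal (ltnW lt_if)) by apply: val_inj; rewrite /= modn_small.
by rewrite P_shift IHi.
Qed.

Lemma prod_cocycle (R : idomainType) (f : nat) (a b : 'I_f -> R) (c : R) :
  (forall t, b t != 0) -> (forall t, a t * b t = b (ordS t) * c) ->
  \prod_t a t = c ^+ f.
Proof.
move=> b_neq0 ab; have Pb_neq0 : \prod_t b t != 0 by apply/prodf_neq0.
apply: (mulIf Pb_neq0); rewrite -big_split (eq_bigr _ (fun t _ => ab t)) big_split /=.
by rewrite [in RHS](reindex_inj (@ordS_inj f)) prodr_const card_ord mulrC.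
Qed.

Lemma twisted_shift_zero (R : idomainType) (f : nat) (c : 'I_f -> R) (q : R) :
  q != 0 -> q ^+ f != 1 -> (forall t, c (ordS t) = q * c t) -> forall t, c t = 0.
Proof.
move=> q_neq0 qf_neq1 c_shift t0; apply/eqP/negPn/negP => ct0_neq0.
have f_gt0 : (0 < f)%N := leq_ltn_trans (leq0n t0) (ltn_ord t0).
have c_neq0 t : c t != 0.
  have inv s : (c (ordS s) != 0) = (c s != 0) by rewrite c_shift mulf_eq0 negb_or q_neq0.
  by rewrite (ordS_const f_gt0 (P := fun s => c s != 0) inv t) -(ordS_const f_gt0 inv t0).
have := @prod_cocycle R f (fun _ => q) c 1 c_neq0.
rewrite prodr_const card_ord expr1n => qf1; apply: (negP qf_neq1); apply/eqP/qf1 => t.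
by rewrite c_shift mulr1.
Qed.

Section Valuation.
Variables (R : idomainType) (V : zmodType) (vp : R -> V).
Hypothesis vpM : forall a b, a != 0 -> b != 0 -> vp (a * b) = vp a + vp b.

Lemma vp1 : vp 1 = 0.
Proof. by apply: (addrI (vp 1)); rewrite addr0 -vpM ?mulr1 ?oner_neq0. Qed.

Lemma vpX (a : R) (n : nat) : a != 0 -> vp (a ^+ n) = vp a *+ n.
Proof.
move=> a_neq0; elim: n => [|n IHn]; first by rewrite expr0 vp1.
by rewrite exprS vpM ?expf_neq0 // IHn mulrS.
Qed.

End Valuation.

Lemma sum_weighted_jumps (g : nat -> int) (n : nat) :
  \sum_(i < n) i%:Z * (g i - g i.+1) = \sum_(i < n) g i.+1 - n%:Z * g n.
Proof.
elim: n => [|n IHn]; first by rewrite !big_ord0 mul0r subr0.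
rewrite !big_ord_recr /= IHn.
have -> : (n.+1)%:Z = n%:Z + 1 by rewrite -addn1 PoszD.
rewrite mulrBr mulrDl mul1r.
by rewrite [_ * g n.+1 + _]addrC opprD !addrA subrK addrK.
Qed.

Lemma tH_step (E : fieldType) (m n : nat) (F : int -> 'I_m -> 'M[E]_2)
  (K c : 'I_m -> nat) :
  (forall s, K s < n)%N ->
  (forall s (i : nat), (0 < i)%N ->
     \rank (F i%:Z s) = if (i <= K s)%N then c s else 0%N) ->
  tH F 0 n = \sum_s (K s * c s)%:Z.
Proof.
move=> K_lt rankF; apply: eq_bigr => s _.
pose g j := (\rank (F j%:Z s))%:Z.
transitivity (\sum_(i < n) i%:Z * (g i - g i.+1)).
  by apply: eq_bigr => i _; rewrite add0r -PoszD addn1.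
have g_succ i : g i.+1 = if (i < K s)%N then (c s)%:Z else 0.
  by rewrite /g rankF //; case: ifP.
have g_n : g n = 0 by rewrite /g rankF ?(leq_ltn_trans _ (K_lt s)) // leqNgt K_lt.
rewrite sum_weighted_jumps g_n mulr0 subr0 (eq_bigr _ (fun (i : 'I_n) _ => g_succ i)).
rewrite -big_mkcond -(big_ord_widen n (fun _ => (c s)%:Z) (ltnW (K_lt s))).
by rewrite sumr_const card_ord -mulr_natl natz PoszM.
Qed.

Definition line (R : Type) (a b : R) : 'rV[R]_2 :=
  \row_(i < 2) (if i == 0 then a else b).

Local Notation eta2 := (delta_mx 0 1 : 'rV_2).

Lemma ord2 (i : 'I_2) : i = 0 \/ i = 1.
Proof. by case: i => [[|[|i]] lt_i2] //; [left | right]; apply: val_inj. Qed.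

Lemma line_neq0 (R : nzRingType) (a b : R) : (a != 0) || (b != 0) -> line a b != 0.
Proof.
apply: contraTneq => /matrixP ab0.
by have := ab0 0 0; have := ab0 0 1; rewrite !mxE /= => -> ->; rewrite eqxx.
Qed.

Lemma rank_cap_rV (E : fieldType) (m n : nat) (u : 'rV[E]_n) (V : 'M[E]_(m, n)) :
  u != 0 -> \rank (u :&: V)%MS = (u <= V)%MS.
Proof.
move=> u_neq0; have rank_u : \rank u = 1%N by rewrite rank_rV u_neq0.
case: (boolP (u <= V)%MS) => [uV | uNV]; first by rewrite (capmx_idPl uV).
apply/eqP; rewrite eqn0Ngt; apply: contra uNV => cap_gt0.
have [cap_le1 cap_eq] := mxrank_leqif_sup (capmxSl u V).
have u_cap : (u <= u :&: V)%MS by rewrite -cap_eq eqn_leq cap_le1 rank_u.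
exact: submx_trans u_cap (capmxSr u V).
Qed.

Lemma eta2_sub_line (E : fieldType) (a b : E) : (a != 0) || (b != 0) ->
  (eta2 <= line a b)%MS = (a == 0).
Proof.
move=> ab_neq0; apply/sub_rVP/eqP => [[c /matrixP eta2_eq] |].
  have := eta2_eq 0 0; have := eta2_eq 0 1; rewrite !mxE /= => e01 /esym/eqP.
  rewrite mulf_eq0 => /orP[/eqP c0 | /eqP //].
  by move: e01; rewrite c0 mul0r => /eqP; rewrite oner_eq0.
move=> a0; move: ab_neq0; rewrite a0 eqxx /= => b_neq0; exists b^-1.
apply/matrixP => i j; rewrite !mxE (ord1 i).
by case: (ord2 j) => -> /=; rewrite ?mulr0 ?mulVf.
Qed.

Section StepFiltration.
Variables (E : fieldType) (m : nat) (x y : 'I_m -> E) (k : 'I_m -> int).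
Hypotheses (xy_neq0 : forall s, (x s != 0) || (y s != 0)) (k_ge0 : forall s, 0 <= k s).

Lemma Fil_xy_pos s (i : nat) : (0 < i)%N ->
  Fil_xy x y k i%:Z s = if (i <= `|k s|)%N then << line (x s) (y s) >>%MS else 0.
Proof.
move=> i_gt0; rewrite /Fil_xy lez_nat leqn0 (negbTE (lt0n_neq0 i_gt0)).
by rewrite -{1}(gez0_abs (k_ge0 s)) lez_nat.
Qed.

Lemma rank_Fil_xy s (i : nat) : (0 < i)%N ->
  \rank (Fil_xy x y k i%:Z s) = if (i <= `|k s|)%N then 1%N else 0%N.
Proof.
move=> i_gt0; rewrite Fil_xy_pos //; case: ifP => _; last exact: mxrank0.
by rewrite genmxE rank_rV line_neq0.
Qed.

Lemma rank_eta2_cap_Fil_xy s (i : nat) : (0 < i)%N ->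
  \rank (eta2 :&: Fil_xy x y k i%:Z s)%MS
    = if (i <= `|k s|)%N then (x s == 0) : nat else 0%N.
Proof.
move=> i_gt0; rewrite Fil_xy_pos //; case: ifP => _; last by rewrite capmx0 mxrank0.
have eta2_neq0 : eta2 != 0 :> 'rV[E]_2 by rewrite -mxrank_eq0 mxrank_delta.
by rewrite rank_cap_rV // genmxE eta2_sub_line.
Qed.

End StepFiltration.

Section HodgeNumbers.
Variables (E : fieldType) (f e : nat) (x y : 'I_(e * f) -> E) (k : 'I_(e * f) -> int).
Hypotheses (xy_neq0 : forall s, (x s != 0) || (y s != 0)) (k_ge0 : forall s, 0 <= k s).
Local Notation Fil := (Fil_xy x y k).

Lemma kbound_gt s : (`|k s| < kbound k)%N.
Proof. by rewrite ltnS (leq_bigmax s). Qed.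

Lemma tH_Fil_xy : tH Fil 0 (kbound k) = \sum_s k s.
Proof.
rewrite (@tH_step _ _ _ _ (fun s => `|k s|%N) (fun=> 1%N)) => [|s|s i i_gt0].
- by apply: congr_big => // s _; rewrite muln1 gez0_abs.
- exact: (kbound_gt s).
- by rewrite rank_Fil_xy.
Qed.

Lemma tH_induced_full (V : 'I_f -> 'M[E]_2) :
  (forall t, (V t == 1%:M)%MS) -> tH (induced V Fil) 0 (kbound k) = \sum_s k s.
Proof.
move=> V_full; rewrite (@tH_step _ _ _ _ (fun s => `|k s|%N) (fun=> 1%N)) => [|s|s i i_gt0].
- by apply: congr_big => // s _; rewrite muln1 gez0_abs.
- exact: (kbound_gt s).
- by rewrite /induced (cap_eqmx (eqmxP (V_full _)) (eqmx_refl _)) cap1mx rank_Fil_xy.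
Qed.

Lemma tH_induced_eta2 (V : 'I_f -> 'M[E]_2) :
  (forall t, (V t == eta2)%MS) ->
  tH (induced V Fil) 0 (kbound k) = \sum_(s | x s == 0) k s.
Proof.
move=> V_eta2; rewrite (@tH_step _ _ _ _ (fun s => `|k s|%N) (fun s => x s == 0 : nat))
  => [|s|s i i_gt0].
- rewrite [RHS]big_mkcond; apply: congr_big => // s _.
  by case: (x s == 0) => /=; rewrite ?muln1 ?muln0 ?gez0_abs.
- exact: (kbound_gt s).
- by rewrite /induced (cap_eqmx (eqmxP (V_eta2 _)) (eqmx_refl _)) rank_eta2_cap_Fil_xy.
Qed.

End HodgeNumbers.

Lemma tH_induced_zero (E : fieldType) (f e n : nat) (Fil : int -> 'I_(e * f) -> 'M[E]_2)
  (V : 'I_f -> 'M[E]_2) :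
  (forall t, \rank (V t) = 0%N) -> tH (induced V Fil) 0 n = 0.
Proof.
move=> V0; rewrite /tH big1 // => s _; rewrite big1 // => i _.
have rank0 j : \rank (induced V Fil j s) = 0%N.
  by apply/eqP; rewrite -leqn0; apply: leq_trans (mxrankS (capmxSl _ _)) _; rewrite V0.
by rewrite !rank0 subrr mulr0.
Qed.

Lemma phi_diagE (E : fieldType) (f p : nat) (d : E) (t : 'I_f) :
  @phi_diag E f p d t = diag_mx (line (p%:R * d) d).
Proof. by apply/matrixP => i j; rewrite !mxE; case: (i == j); rewrite ?mulr1n ?mulr0n. Qed.

Lemma N_stdE (E : fieldType) (f : nat) (t : 'I_f) : N_std E t = delta_mx 1 0.
Proof. by apply/matrixP => i j; rewrite !mxE; case: (_ && _). Qed.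

Lemma delta_mulmx_entry (R : pzSemiRingType) (m n q : nat) (i : 'I_m) (j : 'I_n)
  (M : 'M[R]_(n, q)) a b : (delta_mx i j *m M) a b = M j b *+ (a == i).
Proof.
rewrite mxE (bigD1 j) //= big1 ?addr0 => [|l /negbTE l_neq_j]; rewrite mxE.
  by rewrite eqxx andbT mulr_natl.
by rewrite l_neq_j andbF mul0r.
Qed.

Lemma mulmx_delta_entry (R : pzSemiRingType) (m n q : nat) (M : 'M[R]_(m, n))
  (j : 'I_n) (l : 'I_q) a b : (M *m delta_mx j l) a b = M a j *+ (b == l).
Proof.
rewrite mxE (bigD1 j) //= big1 ?addr0 => [|i /negbTE i_neq_j]; rewrite mxE.
  by rewrite eqxx /= mulr_natr.
by rewrite i_neq_j mulr0.
Qed.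

(* Square matrices agreeing on all column vectors are equal; this turns the
   module-level compatibilities of the G-action into matrix identities. *)
Lemma mx_col_ext (R : pzSemiRingType) (n : nat) (X Y : 'M[R]_n) :
  (forall w : 'cV[R]_n, X *m w = Y *m w) -> X = Y.
Proof.
move=> XY; apply/matrixP => i j.
by have /matrixP/(_ i 0) := XY (delta_mx j 0); rewrite -!colE !mxE.
Qed.

Lemma commute_N_shape (R : pzSemiRingType) (M : 'M[R]_2) :
  delta_mx 1 0 *m M = M *m delta_mx 1 0 -> M 0 1 = 0 /\ M 1 1 = M 0 0.
Proof.
move=> /matrixP NM; have := NM 0 0; have := NM 1 0.
by rewrite !delta_mulmx_entry !mulmx_delta_entry /= !mulr1n mulr0n => -> <-.
Qed.

Lemma diag_twist_entry (R : pzSemiRingType) (n : nat) (d : 'rV[R]_n) (M N : 'M[R]_n) :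
  diag_mx d *m M = N *m diag_mx d -> forall i j, d 0 i * M i j = N i j * d 0 j.
Proof. by rewrite mul_diag_mx mul_mx_diag => /matrixP MN i j; have := MN i j; rewrite !mxE. Qed.

Section SemilinearScalar.
Variables (E : idomainType) (f p : nat) (d : E).
Hypotheses (f_gt0 : (0 < f)%N) (d_neq0 : d != 0) (p_neq0 : p%:R != 0 :> E)
  (pf_neq1 : p%:R ^+ f != 1 :> E).

Lemma semilinear_scalar (M : 'I_f -> 'M[E]_2) :
  (forall t, delta_mx 1 0 *m M t = M t *m delta_mx 1 0) ->
  (forall t, diag_mx (line (p%:R * d) d) *m M (ordS t)
               = M t *m diag_mx (line (p%:R * d) d)) ->
  forall t, M t = (M (Ordinal f_gt0) 0 0)%:M.
Proof.
move=> MN Mphi.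
have pd_neq0 : p%:R * d != 0 by rewrite mulf_neq0.
have diag00 t : M (ordS t) 0 0 = M t 0 0.
  apply: (mulfI pd_neq0); have := diag_twist_entry (Mphi t) 0 0.
  by rewrite !mxE /= => ->; rewrite mulrC.
have low10 t : M (ordS t) 1 0 = p%:R * M t 1 0.
  apply: (mulfI d_neq0); have := diag_twist_entry (Mphi t) 1 0; rewrite !mxE /= => ->.
  by rewrite mulrCA mulrA [d * _]mulrC -mulrA mulrCA.
have low10_0 := twisted_shift_zero p_neq0 pf_neq1 low10.
move=> t; have [up01 diag11] := commute_N_shape (MN t).
apply/matrixP => i j; rewrite !mxE -(ordS_const f_gt0 diag00 t).
by case: (ord2 i) => ->; case: (ord2 j) => -> /=; rewrite ?up01 ?low10_0 ?diag11 ?mulr1n ?mulr0n.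
Qed.

End SemilinearScalar.

Lemma char0_prime_facts (E : fieldType) (p f : nat) :
  [pchar E] =i pred0 -> prime p -> (0 < f)%N ->
  p%:R != 0 :> E /\ p%:R ^+ f != 1 :> E.
Proof.
move=> /pcharf0P natr_eq0 p_prime f_gt0; split; first by rewrite natr_eq0 -lt0n prime_gt0.
have pf_gt1 : (1 < p ^ f)%N by rewrite -{1}(expn0 p) ltn_exp2l ?prime_gt1.
rewrite -natrX -subr_eq0 -[X in _ - X]/(1%:R) -natrB ?(ltnW pf_gt1) //.
by rewrite natr_eq0 subn_eq0 -ltnNge.
Qed.

Section GaloisAction.
Variables (p : nat) (E : fieldType) (G : finGroupType) (f e : nat)
  (act : G -> 'I_f -> 'I_f) (actm : G -> 'I_(e * f) -> 'I_(e * f))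
  (gA : G -> 'I_f -> 'M[E]_2) (delta : E) (Fil : int -> 'I_(e * f) -> 'M[E]_2).
Hypotheses (f_gt0 : (0 < f)%N) (delta_neq0 : delta != 0) (p_neq0 : p%:R != 0 :> E)
  (pf_neq1 : p%:R ^+ f != 1 :> E)
  (G_ok : Gaction_ok act actm gA (@phi_diag E f p delta) (@N_std E f) Fil).

Lemma Gaction_scalar g t : gA g t = (gA g (Ordinal f_gt0) 0 0)%:M.
Proof.
have [_ _ [_ _ g_phi g_N _]] := G_ok.
apply: (semilinear_scalar f_gt0 delta_neq0 p_neq0 pf_neq1) => {}t.
- apply: mx_col_ext => w; have := g_N g (fun=> w) t.
  by rewrite /lin_op /semi_op !mulmxA !N_stdE.
- apply: mx_col_ext => w; have := g_phi g (fun=> w) t.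
  by rewrite /phi_op /semi_op !mulmxA !phi_diagE.
Qed.

Lemma Gaction_character : exists chi : G -> E,
  [/\ forall g, chi g != 0,
      forall g h, chi (g * h)%g = chi g * chi h &
      forall g t, gA g t = (chi g)%:M].
Proof.
have [_ _ [g_1 g_M _ _ _]] := G_ok; pose t0 := Ordinal f_gt0.
exists (fun g => gA g t0 0 0).
have chi1 : gA 1%g t0 0 0 = 1.
  suff -> : gA 1%g t0 = 1%:M by rewrite mxE.
  by apply: mx_col_ext => w; have := g_1 (fun=> w) t0; rewrite /semi_op mul1mx.
have chiM g h : gA (g * h)%g t0 0 0 = gA g t0 0 0 * gA h t0 0 0.
  have : gA (g * h)%g t0 = gA g t0 *m gA h (act g t0).
    by apply: mx_col_ext => w; have := g_M g h (fun=> w) t0; rewrite /semi_op mulmxA.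
  by rewrite [gA h _]Gaction_scalar [gA g _]Gaction_scalar -scalar_mxM => ->; rewrite !mxE.
split=> // [g|]; last exact: Gaction_scalar.
by apply: contra_eq_neq (chiM g g^-1%g) => ->; rewrite mulgV chi1 mul0r oner_neq0.
Qed.

End GaloisAction.

Section NewtonNumbers.
Variables (E : fieldType) (vp : E -> rat) (f e p : nat) (delta : E).
Hypotheses (vpM : forall a b : E, a != 0 -> b != 0 -> vp (a * b) = vp a + vp b)
  (delta_neq0 : delta != 0) (p_neq0 : p%:R != 0 :> E).
Local Notation phiA := (@phi_diag E f p delta).

(* On a line spanned by b_t = (0, beta_t), phi acts through delta. *)
Lemma tN_line (B : 'I_f -> 'rV[E]_2) (A : 'I_f -> 'M[E]_1) :
  (forall t, B t 0 1 != 0) -> phi_matrix phiA B A -> tN vp e A = (e * f)%:R * vp delta.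
Proof.
move=> B_neq0 BA; rewrite /tN.
have cocycle t : \det (A t) * B t 0 1 = B (ordS t) 0 1 * delta.
  have /matrixP/(_ 0 1) := BA t; rewrite det_mx11 phi_diagE tr_diag_mx mul_mx_diag.
  by rewrite !mxE big_ord1 !mxE => ->.
by rewrite (prod_cocycle B_neq0 cocycle) (vpX vpM) // -[_ *+ f]mulr_natl mulrA -natrM.
Qed.

Lemma tN_full (B A : 'I_f -> 'M[E]_2) :
  (forall t, row_free (B t)) -> phi_matrix phiA B A ->
  tN vp e A = (e * f)%:R * (vp p%:R + vp delta *+ 2).
Proof.
move=> B_free BA; rewrite /tN.
have detB_neq0 t : \det (B t) != 0 by rewrite -unitfE -unitmxE -row_free_unit.
have cocycle t : \det (A t) * \det (B t) = \det (B (ordS t)) * (p%:R * delta * delta).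
  have := congr1 determinant (BA t); rewrite !det_mulmx !det_tr phi_diagE det_diag.
  by rewrite !big_ord_recl big_ord0 !mxE /= mulr1 => ->.
rewrite (prod_cocycle detB_neq0 cocycle) (vpX vpM) ?mulf_neq0 //.
by rewrite !vpM ?mulf_neq0 // mulr2n addrA -[_ *+ f]mulr_natl mulrA -natrM.
Qed.

Lemma N_stable_line (B : 'rV[E]_2) :
  row_free B -> (B *m (delta_mx 1 0)^T <= B)%MS -> B 0 0 = 0 /\ B 0 1 != 0.
Proof.
move=> B_free; rewrite trmx_delta => /sub_rVP[c /matrixP BN].
have B_neq0 : B != 0 by move: B_free; rewrite /row_free rank_rV; case: (B != 0).
have e00 := BN 0 0; have e01 := BN 0 1.
rewrite !mulmx_delta_entry !mxE /= ?mulr0n ?mulr1n in e00 e01.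
have B00 : B 0 0 = 0.
  move/esym/eqP: e00; rewrite mulf_eq0 => /orP[/eqP c0 | /eqP //].
  by rewrite e01 c0 mul0r.
split=> //; apply: contraNneq B_neq0 => B01; apply/eqP/matrixP => i j.
by rewrite (ord1 i) mxE; case: (ord2 j) => ->.
Qed.

Lemma submodule_shape (V : 'I_f -> 'M[E]_2) (r : nat) (B : 'I_f -> 'M[E]_(r, 2))
  (A : 'I_f -> 'M[E]_r) :
  (0 < f)%N -> lin_stable (@N_std E f) V -> is_basis V B -> phi_matrix phiA B A ->
  [\/ [/\ forall t, \rank (V t) = 0%N & tN vp e A = 0],
      [/\ forall t, (V t == eta2)%MS & tN vp e A = (e * f)%:R * vp delta]
    | [/\ forall t, (V t == 1%:M)%MS
        & tN vp e A = (e * f)%:R * (vp p%:R + vp delta *+ 2)]].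
Proof.
move=> f_gt0 V_N BV BA.
have rank_V t : \rank (V t) = r.
  by have [B_free BeqV] := BV t; rewrite -(eqmx_rank BeqV); apply/eqP.
have r_le2 : (r <= 2)%N by rewrite -(rank_V (Ordinal f_gt0)) rank_leq_col.
case: r B A BV BA rank_V r_le2 => [|[|[|//]]] B A BV BA rank_V _.
- apply: Or31; split=> //; rewrite /tN big1 ?(vp1 vpM) ?mulr0 // => t _.
  exact: det_mx00.
- have B_line t : B t 0 0 = 0 /\ B t 0 1 != 0.
    have [B_free /andP[BsubV VsubB]] := BV t.
    apply: N_stable_line B_free _; rewrite -(N_stdE E t).
    exact: submx_trans (submxMr _ BsubV) (submx_trans (V_N t) VsubB).
  apply: Or32; split=> [t|]; last by apply: tN_line BA => t; have [] := B_line t.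
  have [B00 B01] := B_line t; have [_ BeqV] := BV t.
  apply/eqmxP; apply: eqmx_trans (eqmx_sym (eqmxP BeqV)) _.
  suff -> : B t = B t 0 1 *: eta2 by apply: eqmx_scale.
  apply/matrixP => i j; rewrite (ord1 i) !mxE.
  by case: (ord2 j) => -> /=; rewrite ?B00 ?mulr0 ?mulr1.
- apply: Or33; split=> [t|]; last by apply: tN_full BA => t; have [] := BV t.
  by apply/andP; rewrite submx1 sub1mx /row_full rank_V.
Qed.

End NewtonNumbers.

Section Theorem11.
Variables (p : nat) (E : fieldType) (vp : E -> rat) (G : finGroupType) (f e : nat)
  (act : G -> 'I_f -> 'I_f) (gA : G -> 'I_f -> 'M[E]_2) (chi : G -> E) (delta : E)
  (x y : 'I_(e * f) -> E) (k : 'I_(e * f) -> int).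
Hypotheses (vpM : forall a b : E, a != 0 -> b != 0 -> vp (a * b) = vp a + vp b)
  (vp_p : vp p%:R = 1) (f_gt0 : (0 < f)%N) (p_neq0 : p%:R != 0 :> E)
  (delta_neq0 : delta != 0) (xy_neq0 : forall s, (x s != 0) || (y s != 0))
  (k_ge0 : forall s, 0 <= k s) (gA_chi : forall g t, gA g t = (chi g)%:M).

Local Notation phiA := (@phi_diag E f p delta).
Local Notation NA := (@N_std E f).
Local Notation Fil := (Fil_xy x y k).
Local Notation n := (kbound k).
Local Notation ef := (e * f)%N.
Local Notation WA := (weakly_admissible vp phiA NA Fil 0 n).
Local Notation tH_sub V := (tH (induced V Fil) 0 n).
Local Notation sum_k := ((\sum_(i < ef) k i)%:~R : rat).
Local Notation sum_k0 := ((\sum_(i < ef | x i == 0) k i)%:~R : rat).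

Lemma full_slope :
  ef%:R * (vp p%:R + vp delta *+ 2) = (2 * ef)%:R * vp delta + ef%:R.
Proof. by rewrite vp_p mulrDr mulr1 addrC -[_ *+ 2]mulr_natl mulrA -natrM [(_ * 2)%N]mulnC. Qed.

Lemma tN_D : tN vp e phiA = (2 * ef)%:R * vp delta + ef%:R.
Proof.
rewrite (tN_full e vpM delta_neq0 p_neq0 (B := fun=> 1%:M)) ?full_slope // => t.
- by rewrite row_free_unit unitmx1.
- by rewrite mul1mx mulmx1.
Qed.

Lemma submodule_numbers (V : 'I_f -> 'M[E]_2) (r : nat) (B : 'I_f -> 'M[E]_(r, 2))
  (A : 'I_f -> 'M[E]_r) :
  lin_stable NA V -> is_basis V B -> phi_matrix phiA B A ->
  [\/ [/\ forall t, \rank (V t) = 0%N, tH_sub V = 0 & tN vp e A = 0],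
      [/\ forall t, (V t == eta2)%MS, tH_sub V = \sum_(s | x s == 0) k s
        & tN vp e A = ef%:R * vp delta]
    | [/\ forall t, (V t == 1%:M)%MS, tH_sub V = \sum_s k s
        & tN vp e A = (2 * ef)%:R * vp delta + ef%:R]].
Proof.
move=> V_N BV BA.
have [[V0 tN0] | [V_eta2 tN1] | [V_full tN2]] :=
  submodule_shape e vpM delta_neq0 p_neq0 f_gt0 V_N BV BA.
- by apply: Or31; rewrite tH_induced_zero.
- by apply: Or32; rewrite tH_induced_eta2.
- by apply: Or33; rewrite tH_induced_full // tN2 full_slope.
Qed.

Lemma D2_eta2 t : (@D2 E f t == eta2)%MS.
Proof. by apply/andP; split; apply/submxP; exists (delta_mx 0 0); rewrite mul_delta_mx. Qed.

Lemma D2_basis : is_basis (@D2 E f) (fun=> eta2).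
Proof.
move=> t; split; first by rewrite /row_free mxrank_delta.
by have /andP[D2_eta eta_D2] := D2_eta2 t; apply/andP.
Qed.

Lemma D2_phi_matrix : phi_matrix phiA (fun=> eta2) (fun=> delta%:M).
Proof.
move=> t; rewrite tr_scalar_mx mul_scalar_mx phi_diagE tr_diag_mx mul_mx_diag.
apply/matrixP => i j; rewrite !mxE (ord1 i).
by case: (ord2 j) => -> /=; rewrite ?mul0r ?mulr0 ?mul1r ?mulr1.
Qed.

Lemma tN_D2 : tN vp e (fun _ : 'I_f => delta%:M : 'M[E]_1) = ef%:R * vp delta.
Proof.
apply: (tN_line e (p := p) vpM delta_neq0 (B := fun=> eta2)); last exact: D2_phi_matrix.
by move=> t; rewrite mxE oner_neq0.
Qed.

Lemma D2_proper : proper_subobj (@D2 E f).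
Proof.
move=> D2_full; have := eqmx_rank (D2_full (Ordinal f_gt0)).
by rewrite (eqmx_rank (D2_eta2 _)) mxrank_delta mxrank1.
Qed.

Lemma D2_phi_stable : phi_stable phiA (@D2 E f).
Proof.
move=> t; suff -> : @D2 E f (ordS t) *m (phiA t)^T = delta *: @D2 E f t by apply: scalemx_sub.
rewrite phi_diagE tr_diag_mx mul_mx_diag; apply/matrixP => i j; rewrite !mxE.
by case: (ord2 i) => ->; case: (ord2 j) => -> /=; rewrite ?mul0r ?mulr0 ?mul1r ?mulr1.
Qed.

Lemma D2_N_stable : lin_stable NA (@D2 E f).
Proof. by move=> t; rewrite N_stdE trmx_delta mul_delta_mx_0 ?sub0mx. Qed.

Lemma D2_subobject :
  sum_k0 = ef%:R * vp delta -> WA_subobject vp phiA NA act gA Fil 0 n (@D2 E f).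
Proof.
move=> sum_k0_eq; split.
- by exists (Ordinal f_gt0); rewrite -mxrank_eq0 mxrank_delta.
- exact: D2_phi_stable.
- exact: D2_N_stable.
- by move=> g t; rewrite gA_chi tr_scalar_mx mul_mx_scalar scalemx_sub.
- exists 1%N, (fun=> eta2), (fun=> delta%:M); split.
  + exact: D2_basis.
  + exact: D2_phi_matrix.
  + by rewrite tN_D2 tH_induced_eta2 //; apply: D2_eta2.
Qed.

(* Only D and D_2 matter for weak admissibility. *)
Lemma weakly_admissibleP :
  WA <-> (2 * ef)%:R * vp delta + ef%:R = sum_k /\ sum_k0 <= ef%:R * vp delta.
Proof.
rewrite /weakly_admissible tH_Fil_xy // tN_D.
split=> [[WA_D WA_sub] | [slope_D slope_D2]].
  split=> //; have := WA_sub _ D2_phi_stable D2_N_stable _ _ _ D2_basis D2_phi_matrix.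
  by rewrite tN_D2 tH_induced_eta2 //; apply: D2_eta2.
split=> // V _ V_N r B A BV BA.
case: (submodule_numbers V_N BV BA) => [[_ -> ->] | [_ -> ->] | [_ -> ->]] //.
by rewrite slope_D.
Qed.

(* D is irreducible iff D_2 is not a weakly admissible sub-object. *)
Lemma irreducibleP :
  WA -> (irreducible vp phiA NA act gA Fil 0 n <-> sum_k0 < ef%:R * vp delta).
Proof.
move=> /weakly_admissibleP[_ slope_D2].
split=> [irr | lt_slope V [[t0 Vt0] _ V_N _ [r [B [A [BV BA tH_eq]]]]]].
  rewrite lt_def slope_D2 andbT; apply/eqP => eq_slope.
  exact: irr _ (D2_subobject (esym eq_slope)) D2_proper.
case: (submodule_numbers V_N BV BA) => [[V0 _ _] | [_ tH_V tN_V] | [V_full _ _]].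
- by move: Vt0; rewrite -mxrank_eq0 V0.
- by move: lt_slope; rewrite -tN_V -tH_eq tH_V ltxx.
- by move=> V_proper; apply: V_proper.
Qed.

Lemma D2_unique (V : 'I_f -> 'M[E]_2) :
  WA_subobject vp phiA NA act gA Fil 0 n V -> proper_subobj V ->
  forall t, (V t == @D2 E f t)%MS.
Proof.
move=> [[t0 Vt0] _ V_N _ [r [B [A [BV BA _]]]]] V_proper t.
case: (submodule_numbers V_N BV BA) => [[V0 _ _] | [V_eta2 _ _] | [V_full _ _]].
- by move: Vt0; rewrite -mxrank_eq0 V0.
- by apply/eqmxP; apply: eqmx_trans (eqmxP (V_eta2 t)) (eqmx_sym (eqmxP (D2_eta2 t))).
- by exfalso; apply: V_proper.
Qed.

End Theorem11.

Unset Implicit Arguments. Set Strict Implicit. Set Printing Implicit Defensive.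

Theorem mainTheorem11 (p : nat) (E : fieldType) (vp : E -> rat)
  (G : finGroupType) (f e : nat)
  (act : G -> 'I_f -> 'I_f) (actm : G -> 'I_(e * f) -> 'I_(e * f))
  (gA : G -> 'I_f -> 'M[E]_2) (delta : E)
  (x y : 'I_(e * f) -> E) (k : 'I_(e * f) -> int) :
  prime p ->
  [pchar E] =i pred0 ->
  (forall a b : E, a != 0 -> b != 0 -> vp (a * b) = vp a + vp b) ->
  vp p%:R = 1 ->
  (0 < f)%N -> (0 < e)%N ->
  delta != 0 ->
  (forall s, (x s != 0) || (y s != 0)) ->
  (forall s, 0 <= k s) ->
  Gaction_ok act actm gA (@phi_diag E f p delta) (@N_std E f) (Fil_xy x y k) ->
  let phiA := @phi_diag E f p delta in
  let NA := @N_std E f in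
  let Fil := Fil_xy x y k in
  let n := kbound k in
  let WA := weakly_admissible vp phiA NA Fil 0 n in
  let ef := (e * f)%N in
  [/\ exists chi : G -> E,
        [/\ forall g, chi g != 0,
            forall g h, chi (g * h)%g = chi g * chi h &
            forall g t, gA g t = (chi g)%:M],
      WA <-> (2 * ef)%:R * vp delta + ef%:R = (\sum_(i < ef) k i)%:~R
             /\ (\sum_(i < ef | x i == 0) k i)%:~R <= ef%:R * vp delta,
      WA -> (irreducible vp phiA NA act gA Fil 0 n <->
             (\sum_(i < ef | x i == 0) k i)%:~R < ef%:R * vp delta) &
      WA -> (\sum_(i < ef | x i == 0) k i)%:~R = ef%:R * vp delta ->
        [/\ WA_subobject vp phiA NA act gA Fil 0 n (@D2 E f),
            proper_subobj (@D2 E f) &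
            forall V, WA_subobject vp phiA NA act gA Fil 0 n V -> proper_subobj V ->
              forall t, (V t == @D2 E f t)%MS]].
Proof.
move=> p_prime char0 vpM vp_p f_gt0 _ delta_neq0 xy_neq0 k_ge0 G_ok; cbv zeta.
have [p_neq0 pf_neq1] := char0_prime_facts char0 p_prime f_gt0.
have [chi [chi_neq0 chiM gA_chi]] :=
  Gaction_character f_gt0 delta_neq0 p_neq0 pf_neq1 G_ok.
split; first by exists chi.
- exact: weakly_admissibleP.
- exact: irreducibleP gA_chi.
- move=> _ slope_eq; split.
  + exact: D2_subobject gA_chi slope_eq.
  + exact: D2_proper.
  + exact: D2_unique.
Qed.
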